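(* Let $F$ be a Sturmian set on an alphabet with $k$ letters and let $X\subset F$ be a finite $F$-maximal bifix code of $F$-degree $d$. Let $P$ (resp. $S$) be the set of proper prefixes (resp. proper suffixes) of words of $X$, including the empty word. Then $\sum_{x\in X}|x|=\mathrm{Card}(P)+\mathrm{Card}(S)+(k-2)d$.
   Context: A word $u\in F$ is right-special if $ua\in F$ for at least two letters $a$. An infinite word $x$ is strict episturmian if its set of factors $F(x)$ is closed under reversal, has exactly one right-special word of each length, and each right-special factor $u$ has $ua\in F(x)$ for every letter $a$; a Sturmian set is the set of factors of a strict episturmian word. A bifix code is a set of nonempty words none of which is a proper prefix or proper suffix of another; $X\subset F$ is $F$-maximal bifix if not properly contained in a bifix code contained in $F$. A parse of $w$ with respect to $X$ is a triple $(v,x,u)$ with $w=vxu$, $v$ having no suffix in $X$, $x\in X^*$, $u$ having no prefix in $X$; $d_F(X)$ is the maximum over $w\in F$ of the number of parses. *)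

From mathcomp Require Import all_boot all_order all_algebra.
Set Implicit Arguments. Unset Strict Implicit. Unset Printing Implicit Defensive.

Section Words.
Variable A : finType.

Definition factor (x : nat -> A) (w : seq A) : Prop :=
  exists i, w = mkseq (fun j => x (i + j)) (size w).

Definition right_special (F : seq A -> Prop) (u : seq A) : Prop :=
  F u /\ exists a b : A, a != b /\ F (rcons u a) /\ F (rcons u b).

Definition strict_episturmian (x : nat -> A) : Prop :=
  (forall w, factor x w -> factor x (rev w)) /\
  (forall n, exists u, size u = n /\ right_special (factor x) u /\
       forall v, size v = n -> right_special (factor x) v -> v = u) /\
  (forall u, right_special (factor x) u -> forall a : A, factor x (rcons u a)).

Definition proper_prefix (u v : seq A) : bool := prefix u v && (u != v).
Definition proper_suffix (u v : seq A) : bool := suffix u v && (u != v).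

Definition bifix_code (Y : seq A -> Prop) : Prop :=
  (forall y, Y y -> y != [::]) /\
  (forall u v, Y u -> Y v -> ~~ proper_prefix u v /\ ~~ proper_suffix u v).

Definition F_maximal_bifix (F : seq A -> Prop) (X : seq (seq A)) : Prop :=
  bifix_code (fun w => w \in X) /\ (forall w, w \in X -> F w) /\
  forall Y : seq A -> Prop, bifix_code Y -> (forall y, Y y -> F y) ->
    (forall w, w \in X -> Y w) -> forall y, Y y -> y \in X.

Definition in_star (X : seq (seq A)) (w : seq A) : Prop :=
  exists s : seq (seq A), all (fun y => y \in X) s /\ w = flatten s.

Definition is_parse (X : seq (seq A)) (w : seq A) (t : seq A * seq A * seq A) :
    Prop :=
  let: (v, x, u) := t in
  w = v ++ x ++ u /\ (forall s, suffix s v -> s \notin X) /\ in_star X x /\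
  (forall p, prefix p u -> p \notin X).

Definition num_parses (X : seq (seq A)) (w : seq A) (n : nat) : Prop :=
  exists s : seq (seq A * seq A * seq A),
    uniq s /\ (forall t, t \in s <-> is_parse X w t) /\ size s = n.

Definition F_degree (F : seq A -> Prop) (X : seq (seq A)) (d : nat) : Prop :=
  (exists w, F w /\ num_parses X w d) /\
  (forall w n, F w -> num_parses X w n -> n <= d).

Definition proper_prefixes (X : seq (seq A)) : seq (seq A) :=
  undup (flatten [seq [seq take i y | i <- iota 0 (size y)] | y <- X]).
Definition proper_suffixes (X : seq (seq A)) : seq (seq A) :=
  undup (flatten [seq [seq drop i.+1 y | i <- iota 0 (size y)] | y <- X]).

End Words.

(* The parses of a word [w] correspond to the prefixes of [w] having no suffix in [X]
   (and, symmetrically, to its suffixes having no prefix in [X]).  Since [d] is the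
   maximal number of parses, every proper extension of a factor with [d] parses ends
   and begins with a word of [X]; hence a factor has no prefix (resp. suffix) in [X]
   exactly when it lies in [P] (resp. [S]), and every factor at least as long as the
   words of [X] has [d] parses.  In a strict episturmian word every factor has a single
   right extension, except the right-special factor [r_n] of each length [n], which
   has [k]; moreover [r_(n+1)] ends with [r_n].  Counting level by level the nodes of
   the prefix tree of [P], the parses of the factors of length [n], and the parses of
   [r_n] gives three recurrences; summing them up to the maximal length of [X] and
   eliminating [sum_n #parses(r_n)] yields the formula. *)

From mathcomp Require Import all_boot all_order all_algebra zify boolp.
Set Implicit Arguments. Unset Strict Implicit. Unset Printing Implicit Defensive.

Section PrefixSuffix.
Variable T : eqType.
Implicit Types u v w : seq T.

Lemma prefixes_comparable u v w : prefix u w -> prefix v w -> prefix u v || prefix v u.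
Proof.
rewrite ![prefix _ w]prefixE => /eqP Hu /eqP Hv.
case: (leqP (size u) (size v)) => h; apply/orP.
- by left; rewrite prefixE -Hv take_takel // Hu.
- by right; rewrite prefixE -Hu take_takel ?Hv // ltnW.
Qed.

Lemma suffixes_comparable u v w : suffix u w -> suffix v w -> suffix u v || suffix v u.
Proof.
by rewrite -!prefix_rev => Hu Hv; have := prefixes_comparable Hu Hv; rewrite !prefix_rev.
Qed.

Lemma prefix_size_eq u v : prefix u v -> size v <= size u -> u = v.
Proof.
move=> /prefixP [s ->]; rewrite size_cat -{2}[size u]addn0 leq_add2l leqn0 size_eq0.
by move/eqP ->; rewrite cats0.
Qed.

Lemma suffix_size_eq u v : suffix u v -> size v <= size u -> u = v.
Proof.
rewrite -prefix_rev => h hs; apply: (can_inj revK); apply: prefix_size_eq h _.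
by rewrite !size_rev.
Qed.

Lemma prefix_rcons_size u v a : prefix u (rcons v a) -> size u <= size v -> prefix u v.
Proof. by rewrite !prefixE -cats1 => /eqP h hs; rewrite -{2}h takel_cat. Qed.

End PrefixSuffix.

Section Parses.
Variable A : finType.
Implicit Types (Y : seq (seq A)) (w u v : seq A).

Definition nosuffix Y v := all (fun y => ~~ suffix y v) Y.
Definition noprefix Y u := all (fun y => ~~ prefix y u) Y.

Lemma nosuffixP Y v : reflect (forall s, suffix s v -> s \notin Y) (nosuffix Y v).
Proof.
apply: (iffP allP) => H.
- by move=> s sv; apply/negP => /H; rewrite sv.
- by move=> y yY; apply/negP => /H; rewrite yY.
Qed.

Lemma noprefixP Y u : reflect (forall p, prefix p u -> p \notin Y) (noprefix Y u).
Proof.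
apply: (iffP allP) => H.
- by move=> p pu; apply/negP => /H; rewrite pu.
- by move=> y yY; apply/negP => /H; rewrite yY.
Qed.

Lemma noprefix_has Y u : noprefix Y u = ~~ has (fun y => prefix y u) Y.
Proof. by rewrite /noprefix -all_predC. Qed.

Lemma nosuffix_rev Y v : nosuffix (map rev Y) (rev v) = noprefix Y v.
Proof. by rewrite /nosuffix all_map; apply: eq_all => y /=; rewrite suffix_rev. Qed.

Lemma noprefix_rev Y v : noprefix (map rev Y) (rev v) = nosuffix Y v.
Proof. by rewrite /noprefix all_map; apply: eq_all => y /=; rewrite prefix_rev. Qed.

Definition prefix_code Y := {in Y &, forall u v, prefix u v -> u = v}.
Definition suffix_code Y := {in Y &, forall u v, suffix u v -> u = v}.

Lemma bifix_code_nil Y : bifix_code (fun w => w \in Y) -> [::] \notin Y.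
Proof. by case=> Hne _; apply/negP => /Hne; rewrite eqxx. Qed.

Lemma bifix_code_prefix Y : bifix_code (fun w => w \in Y) -> prefix_code Y.
Proof.
case=> _ H u v uY vY uv; have [+ _] := H u v uY vY.
by rewrite /proper_prefix uv negbK => /eqP.
Qed.

Lemma bifix_code_suffix Y : bifix_code (fun w => w \in Y) -> suffix_code Y.
Proof.
case=> _ H u v uY vY uv; have [_ +] := H u v uY vY.
by rewrite /proper_suffix uv negbK => /eqP.
Qed.

Lemma prefix_code_rev Y : suffix_code Y -> prefix_code (map rev Y).
Proof.
move=> SC _ _ /mapP [u uY ->] /mapP [v vY ->]; rewrite prefix_rev => uv.
by rewrite (SC u v uY vY uv).
Qed.

Lemma nil_notin_rev Y : [::] \notin Y -> [::] \notin map rev Y.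
Proof.
move=> Yne; apply/mapP => -[y yY Ey].
suff y0 : y = [::] by rewrite -y0 yY in Yne.
by rewrite -[y]revK -Ey.
Qed.

(* Greedy factorisation [w = x ++ u] with [x] in [Y^*] and [u] without prefix in [Y];
   [n] is fuel, sufficient as soon as [size w < n] and [[::] \notin Y]. *)
Fixpoint star_split Y n w : seq A * seq A :=
  if n is n'.+1 then
    if find (fun y => prefix y w) Y < size Y then
      let y := nth [::] Y (find (fun y => prefix y w) Y) in
      let r := star_split Y n' (drop (size y) w) in (y ++ r.1, r.2)
    else ([::], w)
  else ([::], w).

Lemma star_splitP Y n w : [::] \notin Y -> size w < n ->
  let r := star_split Y n w in [/\ w = r.1 ++ r.2, in_star Y r.1 & noprefix Y r.2].
Proof.
move=> Yne; elim: n w => [//|n IH] w /= Hw.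
case: ifP => Hf; last first.
  by split => //; [exists [::] | rewrite noprefix_has has_find Hf].
set y := nth [::] Y _.
have yY : y \in Y by rewrite mem_nth.
have yw : prefix y w by apply: (@nth_find _ [::] (fun y => prefix y w)); rewrite has_find.
have y0 : 0 < size y by case: y yY {yw} => // yY; rewrite yY in Yne.
have [|E1 [s [Hs1 Hs2]] E3] := IH (drop (size y) w).
  by rewrite size_drop -ltnS (leq_trans _ Hw) // ltnS ltn_subrL y0 (leq_trans y0 (size_prefix yw)).
split => //.
- by move: yw; rewrite prefixE => /eqP yw; rewrite -catA -E1 -{1}yw cat_take_drop.
- by exists (y :: s); rewrite /= yY Hs1 Hs2.
Qed.

Lemma star_split_unique Y n s u : prefix_code Y -> [::] \notin Y ->
  all (mem Y) s -> noprefix Y u -> size (flatten s ++ u) < n ->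
  star_split Y n (flatten s ++ u) = (flatten s, u).
Proof.
move=> PC Yne; elim: n s => [//|n IH] [|y s] /=.
  by move=> _ Hu _; rewrite noprefix_has has_find in Hu; rewrite ifN.
move=> /andP [yY Hs] Hu Hsz; rewrite -catA in Hsz *.
have ypos : 0 < size y by case: y yY {Hsz} => // yY; rewrite yY in Yne.
set w := y ++ _.
have Hh : has (fun y' => prefix y' w) Y by apply/hasP; exists y => //; apply: prefix_prefix.
rewrite -has_find Hh.
set z := nth [::] Y _.
have zY : z \in Y by rewrite mem_nth // -has_find.
have zw : prefix z w by apply: (@nth_find _ [::] (fun y1 => prefix y1 w)).
have -> : z = y.
  case/orP: (prefixes_comparable zw (prefix_prefix y (flatten s ++ u))) => h.
  - exact: PC.
  - exact/esym/PC.
rewrite drop_size_cat // IH // -ltnS (leq_trans _ Hsz) //.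
by rewrite ltnS [size (y ++ _)]size_cat -[X in X < _]add0n ltn_add2r.
Qed.

Arguments star_split : simpl never.

Definition parse_at Y w i : seq A * seq A * seq A :=
  let r := star_split Y (size w).+1 (drop i w) in (take i w, r.1, r.2).

Definition parse_starts Y w := [seq i <- iota 0 (size w).+1 | nosuffix Y (take i w)].

(* The number of parses of [w]: a parse is determined by its first component, which
   ranges over the prefixes of [w] having no suffix in [Y]. *)
Definition nparse Y w := size (parse_starts Y w).

Lemma parse_at_uniq Y w : uniq (map (parse_at Y w) (parse_starts Y w)).
Proof.
rewrite map_inj_in_uniq ?filter_uniq ?iota_uniq //.
move=> i j; rewrite !mem_filter !mem_iota /= !add0n !ltnS => /andP [_ hi] /andP [_ hj].
by case=> /(congr1 size); rewrite !size_takel.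
Qed.

Lemma parse_atP Y w t : prefix_code Y -> [::] \notin Y ->
  reflect (is_parse Y w t) (t \in map (parse_at Y w) (parse_starts Y w)).
Proof.
move=> PC Yne; apply: (iffP mapP).
  case=> i; rewrite mem_filter mem_iota add0n ltnS => /andP [Hn Hi] ->.
  have [|E1 E2 E3] := @star_splitP Y (size w).+1 (drop i w) Yne.
    by rewrite size_drop; lia.
  split; first by rewrite -E1 cat_take_drop.
  by split; [exact/nosuffixP | split=> //; exact/noprefixP].
case: t => [[v x0] u] /= [Ew [Hv [[s [Hs Ex]] Hu]]].
exists (size v).
  rewrite mem_filter mem_iota add0n Ew take_size_cat //; apply/andP; split.
    exact/nosuffixP.
  by rewrite leq0n ltnS size_cat leq_addr.
rewrite /parse_at Ew take_size_cat // drop_size_cat // Ex star_split_unique //.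
- exact/noprefixP.
- by rewrite ltnS [size (v ++ _)]size_cat leq_addl.
Qed.

Lemma num_parses_nparse Y w : prefix_code Y -> [::] \notin Y ->
  num_parses Y w (nparse Y w).
Proof.
move=> PC Yne; exists (map (parse_at Y w) (parse_starts Y w)).
split; [exact: parse_at_uniq | split; last by rewrite size_map].
by move=> t; split => /parse_atP; apply.
Qed.

Lemma num_parsesE Y w n : prefix_code Y -> [::] \notin Y ->
  num_parses Y w n -> n = nparse Y w.
Proof.
move=> PC Yne [s [Us [Hs <-]]]; have [s' [Us' [Hs' <-]]] := @num_parses_nparse Y w PC Yne.
apply: perm_size; apply: uniq_perm => // t.
by apply/idP/idP => h; [apply/Hs'; apply/Hs | apply/Hs; apply/Hs'].
Qed.

Lemma nparse_nil Y : nparse Y [::] = nosuffix Y [::].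
Proof. by rewrite /nparse /parse_starts /=; case: nosuffix. Qed.

Lemma nparse_rcons Y w a : nparse Y (rcons w a) = nparse Y w + nosuffix Y (rcons w a).
Proof.
rewrite /nparse /parse_starts !size_filter size_rcons -(addn1 (size w).+1) iotaD.
rewrite count_cat add0n; congr (_ + _); last by rewrite /= take_oversize ?size_rcons ?addn0.
apply: eq_in_count => i; rewrite mem_iota ltnS => /andP [_ hi].
by rewrite -cats1 takel_cat.
Qed.

Lemma leq_nparse_cat Y w v : nparse Y w <= nparse Y (w ++ v).
Proof.
elim/last_ind: v => [|v a IH]; first by rewrite cats0.
by rewrite -rcons_cat nparse_rcons (leq_trans IH) ?leq_addr.
Qed.

(* The number of suffixes of [w] having no prefix in [Y]. *)
Definition nparse_rev Y w := nparse (map rev Y) (rev w).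

Lemma nparse_rev_cons Y a w : nparse_rev Y (a :: w) = nparse_rev Y w + noprefix Y (a :: w).
Proof. by rewrite /nparse_rev rev_cons nparse_rcons -rev_cons nosuffix_rev. Qed.

Lemma leq_nparse_rev_cat Y w v : nparse_rev Y w <= nparse_rev Y (v ++ w).
Proof.
elim: v => [//|a v IH].
by rewrite cat_cons nparse_rev_cons (leq_trans IH) ?leq_addr.
Qed.

Definition rev_parse (t : seq A * seq A * seq A) : seq A * seq A * seq A :=
  let: (v, x, u) := t in (rev u, rev x, rev v).

Lemma rev_parseK : involutive rev_parse.
Proof. by case=> [[v x] u] /=; rewrite !revK. Qed.

Lemma is_parse_rev Y w t : is_parse Y w t -> is_parse (map rev Y) (rev w) (rev_parse t).
Proof.
case: t => [[v x] u] /= [Ew [Hv [[s [Hs Ex]] Hu]]].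
split; first by rewrite Ew !rev_cat catA.
split; [|split].
- by apply/nosuffixP; rewrite nosuffix_rev; apply/noprefixP.
- exists (rev (map rev s)); split; last by rewrite Ex rev_flatten.
  by rewrite all_rev all_map; apply/allP => y ys /=; rewrite map_f //; apply: (allP Hs).
- by apply/noprefixP; rewrite noprefix_rev; apply/nosuffixP.
Qed.

Lemma num_parses_rev Y w n : num_parses Y w n -> num_parses (map rev Y) (rev w) n.
Proof.
move=> [s [Us [Hs <-]]]; exists (map rev_parse s).
rewrite size_map (map_inj_uniq (inv_inj rev_parseK)); split=> //; split=> // t; split.
  by case/mapP => t0 /Hs /is_parse_rev h ->.
move=> /is_parse_rev; rewrite mapK ?revK; last exact: revK.
by move=> /Hs h; rewrite -(rev_parseK t) map_f.
Qed.

Lemma nparse_revE Y w : bifix_code (fun y => y \in Y) -> nparse_rev Y w = nparse Y w.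
Proof.
move=> HY; have Yne := bifix_code_nil HY.
have := num_parses_rev (@num_parses_nparse Y w (bifix_code_prefix HY) Yne).
move/num_parsesE; rewrite /nparse_rev => -> //.
- exact/prefix_code_rev/bifix_code_suffix.
- exact: nil_notin_rev.
Qed.

End Parses.

Section Factors.
Variables (A : finType) (x : nat -> A).
Local Notation F := (factor x).

Definition seg i n : seq A := mkseq (fun j => x (i + j)) n.

Lemma size_seg i n : size (seg i n) = n.
Proof. exact: size_mkseq. Qed.

Lemma segD i m n : seg i (m + n) = seg i m ++ seg (i + m) n.
Proof.
rewrite /seg /mkseq iotaD map_cat add0n -{2}(addn0 m) iotaDl -map_comp.
by congr (_ ++ _); apply: eq_map => j /=; rewrite addnA.
Qed.

Lemma factor_seg i n : F (seg i n).
Proof. by exists i; rewrite size_seg. Qed.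

Lemma factor_nil : F [::].
Proof. by exists 0. Qed.

Lemma factor_cat u v : F (u ++ v) -> F u /\ F v.
Proof.
case=> i; rewrite size_cat -/(seg i _) segD => /eqP; rewrite eqseq_cat ?size_seg //.
by case/andP => /eqP -> /eqP ->; split; apply: factor_seg.
Qed.

Lemma factor_catl u v : F (u ++ v) -> F u.
Proof. by case/factor_cat. Qed.

Lemma factor_catr u v : F (u ++ v) -> F v.
Proof. by case/factor_cat. Qed.

Lemma factor_extend w n : F w -> exists2 v, size v = n & F (w ++ v).
Proof.
case=> i Ew; exists (seg (i + size w) n); first exact: size_seg.
by rewrite {1}Ew -segD; apply: factor_seg.
Qed.

Hypothesis factor_rev : forall w, F w -> F (rev w).

(* Closure under reversal makes [x] recurrent: the reversal of a long prefix of [x]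
   contains [u] at a position as far right as we want. *)
Lemma factor_occurs_after u N : F u -> exists2 i, N <= i & u = seg i (size u).
Proof.
move=> /factor_rev [j Ej]; rewrite size_rev in Ej.
set K := j + size u + N.
have [r Er] := factor_rev (factor_seg 0 K).
rewrite size_rev size_seg in Er.
have xr m : m < K -> x (r + m) = x (K - m.+1).
  move=> hm; have := congr1 (nth (x 0) ^~ m) Er.
  by rewrite nth_rev ?size_seg // !nth_mkseq // ?add0n // subnSK // leq_subr.
exists (r + N); first exact: leq_addl.
apply: (@eq_from_nth _ (x 0)); rewrite ?size_seg // => m hm.
rewrite -[u]revK nth_rev ?size_rev // Ej nth_mkseq; last by lia.
by rewrite /seg nth_mkseq // -addnA xr; [congr x | ]; rewrite /K; lia.
Qed.

Lemma factor_join u w : F u -> F w -> exists z, F (u ++ z ++ w).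
Proof.
case=> i Eu Fw; rewrite -/(seg i _) in Eu; have [j hj Ew] := factor_occurs_after (i + size u) Fw.
set m := j - (i + size u); exists (seg (i + size u) m).
suff -> : u ++ seg (i + size u) m ++ w = seg i (size u + (m + size w)) by apply: factor_seg.
by rewrite !segD -Eu /m subnKC // -Ew.
Qed.

End Factors.

Lemma sum_bool_count (J : Type) (r : seq J) (a : pred J) :
  \sum_(j <- r) (a j : nat) = count a r.
Proof. by elim: r => [|j r IH]; rewrite ?big_nil ?big_cons ?IH. Qed.

Section WordsOfLength.
Variable A : finType.

Fixpoint words n : seq (seq A) :=
  if n is n'.+1 then [seq rcons w a | w <- words n', a <- enum A] else [:: [::]].

Lemma mem_words n w : (w \in words n) = (size w == n).
Proof.
elim: n w => [|n IH] w /=; first by rewrite inE -size_eq0.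
apply/allpairsP/idP => [[[w' a] /= [+ _ ->]]|].
  by rewrite IH size_rcons eqSS.
case/lastP: w => [//|w a]; rewrite size_rcons eqSS => h.
by exists (w, a); rewrite /= IH h mem_enum.
Qed.

Lemma words_uniq n : uniq (words n).
Proof.
elim: n => [//|n IH] /=; apply: allpairs_uniq => //; first exact: enum_uniq.
by move=> [w a] [w' a'] _ _ /= /rcons_inj [-> ->].
Qed.

Lemma big_wordsS n (f : seq A -> nat) :
  \sum_(w <- words n.+1) f w = \sum_(w <- words n) \sum_(a <- enum A) f (rcons w a).
Proof. exact: big_allpairs_dep. Qed.

Lemma sum_words_mem (Z : seq (seq A)) n : uniq Z ->
  \sum_(w <- words n) (w \in Z : nat) = count (fun z => size z == n) Z.
Proof.
move=> UZ; rewrite sum_bool_count -!size_filter; apply: perm_size.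
apply: uniq_perm; rewrite ?filter_uniq ?words_uniq // => w.
by rewrite !mem_filter mem_words andbC.
Qed.

End WordsOfLength.

Lemma sum_count_eq (T : eqType) (Z : seq T) (f : T -> nat) (g : nat -> nat) N :
  all (fun z => f z < N) Z ->
  \sum_(0 <= m < N) g m * count (fun z => f z == m) Z = \sum_(z <- Z) g (f z).
Proof.
elim: Z => [|z Z IH] /=; first by rewrite big_nil big1 // => m _; rewrite muln0.
case/andP => hz hZ; rewrite big_cons -(IH hZ).
under eq_bigr => m _ do rewrite mulnDr.
rewrite big_split /=; congr (_ + _).
rewrite (bigD1_seq (f z)) ?iota_uniq ?mem_index_iota //= eqxx muln1 big1 ?addn0 // => m.
by rewrite eq_sym => /negPf ->; rewrite muln0.
Qed.

Lemma sum_count_size (T : eqType) (Z : seq T) (f : T -> nat) N :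
  all (fun z => f z < N) Z -> \sum_(0 <= m < N) count (fun z => f z == m) Z = size Z.
Proof.
move=> hZ; rewrite -sum1_size -(sum_count_eq (fun=> 1) hZ).
by apply: eq_bigr => m _; rewrite mul1n.
Qed.

Lemma sum_increments (f g : nat -> nat) n :
  (forall m, f m.+1 = f m + g m) -> f n = f 0 + \sum_(0 <= m < n) g m.
Proof.
move=> fS; elim: n => [|n IH]; first by rewrite big_geq ?addn0.
by rewrite big_nat_recr //= fS IH addnA.
Qed.

Lemma sum_prefix_sums (c : nat -> nat) N :
  \sum_(0 <= n < N) \sum_(0 <= i < n.+1) c i + \sum_(0 <= i < N) i * c i =
  N * \sum_(0 <= i < N) c i.
Proof.
elim: N => [|N IH]; first by rewrite !big_geq.
rewrite !big_nat_recr //= mulSn mulnDr; lia.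
Qed.

Lemma sum_weighted_recurrence (a b c : nat -> nat) M :
  (forall m, a m.+1 + b m.+1 = a m + c m) ->
  \sum_(0 <= m < M) m.+1 * b m.+1 + M * a M =
  \sum_(0 <= m < M) a m + \sum_(0 <= m < M) m.+1 * c m.
Proof.
move=> abc; elim: M => [|M IH]; first by rewrite !big_geq.
have := congr1 (muln M.+1) (abc M); rewrite !big_nat_recr //= !mulnDr !mulSn; lia.
Qed.

Section StrictEpisturmian.
Variables (A : finType) (x : nat -> A).
Hypothesis Hx : strict_episturmian x.
Local Notation F := (factor x).
Local Notation k := #|A|.

Lemma factor_rev w : F w -> F (rev w).
Proof. by case: Hx => H _; apply: H. Qed.

Definition rspecial n : seq A := projT1 (cid (Hx.2.1 n)).

Lemma rspecial_spec n : [/\ size (rspecial n) = n, right_special F (rspecial n) &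
  forall v, size v = n -> right_special F v -> v = rspecial n].
Proof. by rewrite /rspecial; case: cid => u [? [? ?]]. Qed.

Lemma size_rspecial n : size (rspecial n) = n.
Proof. by case: (rspecial_spec n). Qed.

Lemma right_specialE w : right_special F w <-> w = rspecial (size w).
Proof.
case: (rspecial_spec (size w)) => _ RS Huniq.
by split=> [|E]; [exact: Huniq | rewrite E].
Qed.

Lemma card_alphabet_gt1 : 1 < k.
Proof.
by case: (rspecial_spec 0) => _ [_ [a [b [ab _]]]] _; apply/card_gt1P; exists a, b.
Qed.

(* A suffix of a right-special factor is right-special. *)
Lemma rspecialS n : exists c, rspecial n.+1 = c :: rspecial n.
Proof.
case: (rspecial_spec n.+1) => + [+ [a [b [ab [Fa Fb]]]]] _.
case: (rspecial n.+1) Fa Fb => [//|c r] Fa Fb [sr] Fr; exists c; congr (_ :: _).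
rewrite -sr; apply/right_specialE; split; first exact: (@factor_catr _ x [:: c]).
by exists a, b; split=> //; split; apply: (@factor_catr _ x [:: c]).
Qed.

Lemma count_factor_rcons w :
  \sum_(a <- enum A) `[< F (rcons w a) >] = `[< F w >] + (k - 1) * (w == rspecial (size w)).
Proof.
have k1 := card_alphabet_gt1.
rewrite sum_bool_count; have [Fw|nFw] := asboolP (F w); last first.
  have -> : (w == rspecial (size w)) = false.
    by apply/negbTE/negP => /eqP/right_specialE [/nFw].
  rewrite muln0; apply/eqP; rewrite -leqn0 leqNgt -has_count.
  by apply/hasP => -[a _ /asboolP]; rewrite -cats1 => /factor_catl.
have [/eqP RSw|nRSw] := boolP (w == rspecial (size w)).
  rewrite (eq_count (a2 := predT)) ?count_predT -?cardE /=; first by rewrite muln1 subnKC // ltnW.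
  by move=> a; apply/asboolP; case: Hx => _ [_]; apply; apply/right_specialE.
have [[|a0 []] // _ Fa0] := factor_extend 1 Fw.
rewrite (eq_count (a2 := pred1 a0)) ?count_uniq_mem ?enum_uniq ?mem_enum ?muln0 //.
move=> a /=; apply/asboolP/eqP => [Fa|->]; last by rewrite cats1 in Fa0.
apply/eqP/negP => ne; apply/negP: nRSw; apply/negPn/eqP/right_specialE; split=> //.
by exists a, a0; rewrite cats1 in Fa0; split; [apply/negP | split].
Qed.

Lemma sum_words_rspecial n (g : seq A -> nat) :
  \sum_(w <- words A n) (w == rspecial (size w)) * g w = g (rspecial n).
Proof.
rewrite (bigD1_seq (rspecial n)) ?words_uniq ?mem_words ?size_rspecial //=.
rewrite eqxx mul1n big1_seq ?addn0 // => w /andP [ne].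
by rewrite mem_words => /eqP->; rewrite (negbTE ne).
Qed.

Lemma nfactors n : \sum_(w <- words A n) `[< F w >] = 1 + (k - 1) * n.
Proof.
have F0 : `[< F [::] >] by apply/asboolP/factor_nil.
elim: n => [|n IH]; first by rewrite /= big_seq1 F0 muln0.
rewrite big_wordsS (eq_bigr _ (fun w _ => count_factor_rcons w)) big_split /= IH.
rewrite -big_distrr /= (eq_bigr (fun w => (w == rspecial (size w)) * 1)) ?sum_words_rspecial.
  by rewrite mulnS; lia.
by move=> w _; rewrite muln1.
Qed.

End StrictEpisturmian.

Section ProperAffixes.
Variables (A : finType) (X : seq (seq A)).

Lemma mem_proper_prefixes p :
  (p \in proper_prefixes X) = has (fun y => prefix p y && (size p < size y)) X.
Proof.
rewrite mem_undup; apply/flattenP/hasP.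
  case=> _ /mapP [y yX ->] /mapP [i].
  rewrite mem_iota add0n => /andP [_ hi] ->.
  by exists y => //; rewrite prefix_take size_takel ?hi // ltnW.
case=> y yX /andP [py hs]; exists [seq take i y | i <- iota 0 (size y)].
  exact: map_f.
by apply/mapP; exists (size p); [rewrite mem_iota | move: py; rewrite prefixE => /eqP].
Qed.

Lemma mem_proper_suffixes s :
  (s \in proper_suffixes X) = has (fun y => suffix s y && (size s < size y)) X.
Proof.
rewrite mem_undup; apply/flattenP/hasP.
  case=> _ /mapP [y yX ->] /mapP [i].
  rewrite mem_iota add0n => /andP [_ hi] ->.
  by exists y => //; rewrite suffix_drop size_drop ltn_subrL (leq_ltn_trans _ hi).
case=> y yX /andP [sy hs]; exists [seq drop i.+1 y | i <- iota 0 (size y)].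
  exact: map_f.
apply/mapP; exists (size y - (size s).+1).
  by rewrite mem_iota add0n ltn_subrL (leq_ltn_trans _ hs).
by rewrite subnSK //; move: sy; rewrite suffixE => /eqP.
Qed.

Lemma proper_prefixes_rcons p a :
  (rcons p a \in proper_prefixes X) || (rcons p a \in X) -> p \in proper_prefixes X.
Proof.
rewrite !mem_proper_prefixes => /orP [/hasP [y yX /andP [pay hs]]|paX].
  apply/hasP; exists y; rewrite // (prefix_trans (prefix_rcons p a) pay).
  by rewrite size_rcons in hs; rewrite ltnW.
by apply/hasP; exists (rcons p a); rewrite // prefix_rcons size_rcons /=.
Qed.

Lemma prefix_code_notin_proper_prefixes y :
  prefix_code X -> y \in X -> y \notin proper_prefixes X.
Proof.
move=> PC yX; rewrite mem_proper_prefixes; apply/hasP => -[z zX /andP [yz]].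
by rewrite (PC _ _ yX zX yz) ltnn.
Qed.

End ProperAffixes.

Section MaximalBifixCode.
Variables (A : finType) (x : nat -> A) (X : seq (seq A)) (d : nat).
Hypothesis Hx : strict_episturmian x.
Hypothesis UX : uniq X.
Hypothesis HX : bifix_code (fun w => w \in X).
Hypothesis XF : forall w, w \in X -> factor x w.
Hypothesis Hdeg : F_degree (factor x) X d.

Local Notation F := (factor x).
Local Notation k := #|A|.
Local Notation P := (proper_prefixes X).
Local Notation S := (proper_suffixes X).
Local Notation r := (rspecial Hx).

Let Xne : [::] \notin X := bifix_code_nil HX.
Let PC : prefix_code X := bifix_code_prefix HX.
Let SC : suffix_code X := bifix_code_suffix HX.

Lemma nparse_le_degree w : F w -> nparse X w <= d.
Proof. by move=> Fw; apply: Hdeg.2 Fw (num_parses_nparse w PC Xne). Qed.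

Lemma exists_nparse_degree : exists2 w, F w & nparse X w = d.
Proof. by case: Hdeg => -[w [Fw /(num_parsesE PC Xne) ->]] _; exists w. Qed.

Lemma nosuffix_nil : nosuffix X [::].
Proof. by apply/nosuffixP => s; rewrite suffixs0 => /eqP ->. Qed.

Lemma noprefix_nil : noprefix X [::].
Proof. by apply/noprefixP => p; rewrite prefixs0 => /eqP ->. Qed.

(* The maximality of the degree forces every proper right (resp. left) extension of a
   word of degree [d] to end (resp. start) with a word of [X]. *)
Lemma max_nparse_rcons w v :
  nparse X w = d -> F (w ++ v) -> v != [::] -> ~~ nosuffix X (w ++ v).
Proof.
case/lastP: v => [//|v a] wd; rewrite -rcons_cat => /nparse_le_degree.
rewrite nparse_rcons; have := leq_nparse_cat X w v; rewrite wd.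
by case: nosuffix => // h1; rewrite addn1 => /(leq_ltn_trans h1); rewrite ltnn.
Qed.

Lemma max_nparse_cons w v :
  nparse X w = d -> F (v ++ w) -> v != [::] -> ~~ noprefix X (v ++ w).
Proof.
case: v => [//|a v] wd; rewrite cat_cons => /nparse_le_degree.
rewrite -(nparse_revE _ HX) nparse_rev_cons.
have := leq_nparse_rev_cat X w v; rewrite nparse_revE // wd.
by case: noprefix => // h1; rewrite addn1 => /(leq_ltn_trans h1); rewrite ltnn.
Qed.

Lemma code_nonempty : exists y, y \in X.
Proof.
have [w Fw wd] := exists_nparse_degree; have [v sv Fwv] := factor_extend 1 Fw.
have vne : v != [::] by rewrite -size_eq0 sv.
by have /allPn [y yX _] := max_nparse_rcons wd Fwv vne; exists y.
Qed.

Lemma suffix_comparable_code u : F u -> exists2 y, y \in X & suffix y u || suffix u y.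
Proof.
case: u => [|c u] Fu.
  by have [y yX] := code_nonempty; exists y; rewrite // suffix0s orbT.
have [w Fw wd] := exists_nparse_degree; have [z Fz] := factor_join (@factor_rev _ _ Hx) Fw Fu.
have zcu : z ++ c :: u != [::] by case: z {Fz}.
have /allPn [y yX /negPn yz] := max_nparse_rcons wd Fz zcu.
by exists y => //; apply: suffixes_comparable yz _; rewrite catA suffix_suffix.
Qed.

Lemma prefix_comparable_code u : F u -> exists2 y, y \in X & prefix y u || prefix u y.
Proof.
case: u => [|c u] Fu.
  by have [y yX] := code_nonempty; exists y; rewrite // prefix0s orbT.
have [w Fw wd] := exists_nparse_degree; have [z Fz] := factor_join (@factor_rev _ _ Hx) Fu Fw.
rewrite catA in Fz; have /allPn [y yX /negPn yz] := max_nparse_cons wd Fz isT.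
by exists y => //; apply: prefixes_comparable yz _; rewrite -catA prefix_prefix.
Qed.

Lemma factor_proper_prefix p : p \in P -> F p.
Proof.
rewrite mem_proper_prefixes => /hasP [y yX /andP [/prefixP [s Es] _]].
by apply: (@factor_catl _ x p s); rewrite -Es; apply: XF.
Qed.

Lemma factor_proper_suffix s : s \in S -> F s.
Proof.
rewrite mem_proper_suffixes => /hasP [y yX /andP [/suffixP [p Ep] _]].
by apply: (@factor_catr _ x p s); rewrite -Ep; apply: XF.
Qed.

Lemma noprefixE u : F u -> noprefix X u = (u \in P).
Proof.
move=> Fu; rewrite mem_proper_prefixes; apply/idP/hasP => [nu|[y yX /andP [uy hs]]].
  have [y yX /orP [yu|uy]] := prefix_comparable_code Fu.
    by move/allP: nu => /(_ y yX); rewrite yu.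
  exists y => //; rewrite uy ltnNge; apply/negP => /(prefix_size_eq uy) E.
  by move/allP: nu => /(_ y yX); rewrite -E prefix_refl.
apply/allP => z zX; apply/negP => zu.
have E := PC zX yX (prefix_trans zu uy); rewrite E in zu.
by move: (size_prefix zu); rewrite leqNgt hs.
Qed.

Lemma nosuffixE u : F u -> nosuffix X u = (u \in S).
Proof.
move=> Fu; rewrite mem_proper_suffixes; apply/idP/hasP => [nu|[y yX /andP [uy hs]]].
  have [y yX /orP [yu|uy]] := suffix_comparable_code Fu.
    by move/allP: nu => /(_ y yX); rewrite yu.
  exists y => //; rewrite uy ltnNge; apply/negP => /(suffix_size_eq uy) E.
  by move/allP: nu => /(_ y yX); rewrite -E suffix_refl.
apply/allP => z zX; apply/negP => zu.
have E := SC zX yX (suffix_trans zu uy); rewrite E in zu.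
by move: (size_suffix zu); rewrite leqNgt hs.
Qed.

Lemma proper_prefix_rcons_or_code p a :
  p \in P -> F (rcons p a) -> (rcons p a \in P) || (rcons p a \in X).
Proof.
move=> pP Fpa; rewrite -noprefixE //; apply/orP; case: (boolP (noprefix X _)) => [|]; first by left.
case/allPn => y yX /negPn ypa; right.
move: pP; rewrite mem_proper_prefixes => /hasP [z zX /andP [pz hs]].
have [hl|hl] := leqP (size y) (size p).
  have yp := prefix_rcons_size ypa hl.
  by move: hs; rewrite -(PC yX zX (prefix_trans yp pz)) ltnNge (size_prefix yp).
by rewrite -(prefix_size_eq ypa) // size_rcons.
Qed.

Lemma proper_prefix_rcons p a :
  (rcons p a \in P) + (rcons p a \in X) = (p \in P) && `[< F (rcons p a) >] :> nat.
Proof.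
have [pP|npP] := boolP (p \in P); last first.
  have nP : rcons p a \notin P.
    by apply: contra npP => h; apply: (@proper_prefixes_rcons _ _ p a); rewrite h.
  have nX : rcons p a \notin X.
    by apply: contra npP => h; apply: (@proper_prefixes_rcons _ _ p a); rewrite h orbT.
  by rewrite (negPf nP) (negPf nX).
have [Fpa|nFpa] := asboolP (F (rcons p a)).
  have := proper_prefix_rcons_or_code pP Fpa.
  case: (boolP (_ \in X)) => [/(prefix_code_notin_proper_prefixes PC) /negPf -> //|_].
  by rewrite orbF => ->.
have nP : rcons p a \notin P by apply/negP => /factor_proper_prefix /nFpa.
have nX : rcons p a \notin X by apply/negP => /XF /nFpa.
by rewrite (negPf nP) (negPf nX).
Qed.

Definition npre m := count (fun p => size p == m) P.
Definition ncode m := count (fun y => size y == m) X.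
Definition nsuf m := count (fun s => size s == m) S.
Definition rspecial_pre m : nat := r m \in P.
Definition nparse_rspecial n := nparse X (r n).
Definition nparse_sum n := \sum_(w <- words A n) `[< F w >] * nparse X w.

Lemma npre_rec m : npre m.+1 + ncode m.+1 = npre m + (k - 1) * rspecial_pre m.
Proof.
rewrite /npre /ncode /rspecial_pre -!sum_words_mem ?undup_uniq // -big_split big_wordsS /=.
rewrite -(sum_words_rspecial Hx m (fun p => p \in P)) big_distrr -big_split /=.
apply: eq_bigr => p _; under eq_bigr => a _ do rewrite proper_prefix_rcons.
case: (boolP (p \in P)) => pP /=; last by rewrite big1 ?muln0.
by rewrite count_factor_rcons asboolT ?muln1 //; apply: factor_proper_prefix.
Qed.

Lemma nparse_rcons_factor w a :
  `[< F (rcons w a) >] * nparse X (rcons w a) =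
  `[< F (rcons w a) >] * nparse X w + (rcons w a \in S).
Proof.
have [Fwa|nFwa] := asboolP (F (rcons w a)).
  by rewrite !mul1n nparse_rcons nosuffixE.
have nS : rcons w a \notin S by apply/negP => /factor_proper_suffix /nFwa.
by rewrite (negPf nS).
Qed.

Lemma nparse_sum_rec n :
  nparse_sum n.+1 = nparse_sum n + ((k - 1) * nparse_rspecial n + nsuf n.+1).
Proof.
rewrite /nparse_sum /nsuf /nparse_rspecial -sum_words_mem ?undup_uniq // !big_wordsS.
rewrite -(sum_words_rspecial Hx n (nparse X)) big_distrr /= -!big_split /=.
apply: eq_bigr => w _; rewrite (eq_bigr _ (fun a _ => nparse_rcons_factor w a)).
rewrite big_split /= -big_distrl /= count_factor_rcons addnA; congr (_ + _).
by rewrite mulnDl mulnA.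
Qed.

Lemma nparse_rspecial_rec n : nparse_rspecial n.+1 = nparse_rspecial n + rspecial_pre n.+1.
Proof.
have [c E] := rspecialS Hx n.
have Fr : F (r n.+1) by case: (rspecial_spec Hx n.+1) => _ [].
rewrite /nparse_rspecial /rspecial_pre -(noprefixE Fr) -!(nparse_revE _ HX) E.
exact: nparse_rev_cons.
Qed.

Lemma rspecial0 : r 0 = [::].
Proof. by apply/size0nil; rewrite size_rspecial. Qed.

Lemma nil_proper_prefix : [::] \in P.
Proof. by rewrite -noprefixE ?noprefix_nil //; apply: factor_nil. Qed.

Lemma nil_proper_suffix : [::] \in S.
Proof. by rewrite -nosuffixE ?nosuffix_nil //; apply: factor_nil. Qed.

Lemma nparse_rspecial0 : nparse_rspecial 0 = 1.
Proof. by rewrite /nparse_rspecial rspecial0 nparse_nil nosuffix_nil. Qed.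

Lemma rspecial_pre0 : rspecial_pre 0 = 1.
Proof. by rewrite /rspecial_pre rspecial0 nil_proper_prefix. Qed.

Lemma nparse_sum0 : nparse_sum 0 = 1.
Proof.
by rewrite /nparse_sum /= big_seq1 asboolT ?nparse_nil ?nosuffix_nil //; apply: factor_nil.
Qed.

Lemma nsuf0 : nsuf 0 = 1.
Proof.
rewrite /nsuf (eq_count (a2 := pred1 [::])) => [|s]; last by rewrite /= size_eq0.
by rewrite count_uniq_mem ?undup_uniq ?nil_proper_suffix.
Qed.

Definition maxlen := \max_(y <- X) size y.

Lemma size_proper_prefix p : p \in P -> size p < maxlen.
Proof.
rewrite mem_proper_prefixes => /hasP [y yX /andP [_ hs]].
exact: leq_trans hs (leq_bigmax_seq _ yX _).
Qed.

Lemma size_proper_suffix s : s \in S -> size s < maxlen.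
Proof.
rewrite mem_proper_suffixes => /hasP [y yX /andP [_ hs]].
exact: leq_trans hs (leq_bigmax_seq _ yX _).
Qed.

Lemma size_code y : y \in X -> size y <= maxlen.
Proof. by move=> yX; apply: leq_bigmax_seq yX _. Qed.

Lemma nparse_rev_long v w :
  maxlen <= size w -> F (v ++ w) -> nparse_rev X (v ++ w) = nparse_rev X w.
Proof.
move=> hw; elim: v => [//|a v IH] Fv; have Fvw := @factor_catr _ x [:: a] _ Fv.
rewrite cat_cons nparse_rev_cons IH // noprefixE //.
case: (boolP (_ \in P)) => [/size_proper_prefix|]; last by rewrite addn0.
by rewrite ltnNge /= size_cat (leq_trans hw) // leqW // leq_addl.
Qed.

(* Append [w] to a factor with [d] parses; adding letters on the left of a word at
   least as long as the words of [X] does not change its number of parses. *)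
Lemma nparse_long w : F w -> maxlen <= size w -> nparse X w = d.
Proof.
move=> Fw hw; have [w0 Fw0 w0d] := exists_nparse_degree.
have [z Fz] := factor_join (@factor_rev _ _ Hx) Fw0 Fw.
have -> : nparse X w = nparse X ((w0 ++ z) ++ w).
  by rewrite -!(nparse_revE _ HX) nparse_rev_long // -catA.
apply/eqP; rewrite eqn_leq nparse_le_degree -?catA //= -[X in X <= _]w0d.
exact: leq_nparse_cat.
Qed.

Lemma nparse_rspecial_sum n : nparse_rspecial n = \sum_(0 <= i < n.+1) rspecial_pre i.
Proof.
rewrite (sum_increments _ nparse_rspecial_rec) big_nat_recl //.
by rewrite nparse_rspecial0 rspecial_pre0.
Qed.

Lemma sum_rspecial_pre : \sum_(0 <= m < maxlen.+1) rspecial_pre m = d.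
Proof.
rewrite -nparse_rspecial_sum /nparse_rspecial nparse_long ?size_rspecial //.
by case: (rspecial_spec Hx maxlen) => _ [].
Qed.

Lemma nparse_sum_long n : maxlen <= n -> nparse_sum n = d * (1 + (k - 1) * n).
Proof.
move=> hn; rewrite -(nfactors Hx) big_distrr; apply: eq_big_seq => w.
rewrite mem_words => /eqP sw; have [Fw|] := asboolP (F w); last by rewrite /= mul0n muln0.
by rewrite /= nparse_long ?sw // mul1n muln1.
Qed.

Lemma sum_size_code :
  \sum_(y <- X) size y =
  size P + (k - 1) * (\sum_(0 <= m < maxlen.+1) m * rspecial_pre m + d).
Proof.
have sizes : \sum_(y <- X) size y = \sum_(0 <= m < maxlen.+1) m.+1 * ncode m.+1.
  rewrite -(@sum_count_eq _ X size id maxlen.+2); last first.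
    by apply/allP => y /size_code; rewrite ltnS => /leqW.
  by rewrite big_nat_recl // mul0n add0n.
have npre_last : npre maxlen.+1 = 0.
  apply/eqP; rewrite -leqn0 leqNgt -has_count; apply/hasP => -[p /size_proper_prefix + /eqP].
  by move=> + sp; rewrite sp ltnNge leqnSn.
have := sum_weighted_recurrence (c := fun m => (k - 1) * rspecial_pre m) maxlen.+1 npre_rec.
rewrite sizes npre_last muln0 addn0 sum_count_size => [->|]; last first.
  by apply/allP => p /size_proper_prefix /ltnW.
congr (_ + _); rewrite -sum_rspecial_pre -big_split big_distrr /=.
by apply: eq_bigr => m _; rewrite mulnCA mulSn addnC.
Qed.

Lemma nparse_sum_eq :
  d * (1 + (k - 1) * maxlen.+1) =
  size S + (k - 1) * \sum_(0 <= n < maxlen.+1) nparse_rspecial n.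
Proof.
rewrite -nparse_sum_long // (sum_increments _ nparse_sum_rec) big_split -big_distrr /=.
rewrite nparse_sum0 addnCA addnC (_ : 1 + _ = \sum_(0 <= m < maxlen.+2) nsuf m).
  by rewrite sum_count_size //; apply/allP => s /size_proper_suffix /ltnW /leqW.
by rewrite [RHS]big_nat_recl // nsuf0.
Qed.

Lemma sum_nparse_rspecial_eq :
  \sum_(0 <= n < maxlen.+1) nparse_rspecial n + \sum_(0 <= m < maxlen.+1) m * rspecial_pre m =
  maxlen.+1 * d.
Proof.
under eq_bigr do rewrite nparse_rspecial_sum.
by rewrite sum_prefix_sums sum_rspecial_pre.
Qed.

End MaximalBifixCode.

Local Open Scope ring_scope.

Theorem mainTheorem19 (A : finType) (x : nat -> A) (X : seq (seq A)) (d : nat) :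
  strict_episturmian x ->
  uniq X ->
  F_maximal_bifix (factor x) X ->
  F_degree (factor x) X d ->
  ((\sum_(y <- X) size y)%N)%:Z =
    (size (proper_prefixes X))%:Z + (size (proper_suffixes X))%:Z
    + (#|A|%:Z - 2) * d%:Z.
Proof.
move=> Hx UX [HX [XF _]] Hdeg.
have k2 := card_alphabet_gt1 Hx.
have Ecode := sum_size_code Hx UX HX XF Hdeg.
have Esuf := nparse_sum_eq Hx HX XF Hdeg.
have Erho := sum_nparse_rspecial_eq Hx HX Hdeg.
rewrite Ecode; nia.
Qed.
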